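(* Let $\Gamma$ be a finite connected graph with vertex set $V$, and let $Y\subset Z\subset V$ with $Z\neq\emptyset$. Let $s:V\to\mathbb{Z}_{\ge0}$. Let $H_w(s,Y)$ be the expected number of particles stopping in $Y$ when $s(x)$ particles start at each vertex $x$ and perform independent simple random walks on $\Gamma$, each stopped on first hitting $Z$. Let $H_r(s,Y)$ be the number of particles stopping in $Y$ when $s(x)$ particles start at each vertex $x$ and perform rotor-router walks on $\Gamma$, each stopped on first hitting $Z$ (particles moved one step at a time in any order until all lie in $Z$). Let $H(x)=H_w(\mathbf{1}_{x},Y)$ be the probability that simple random walk from $x$ stopped on hitting $Z$ stops in $Y$. Then \[ |H_r(s,Y)-H_w(s,Y)|\le\sum_{u\in V\setminus Z}\ \sum_{v\sim u}|H(u)-H(v)|, \] regardless of $s$, of the initial rotor configuration, and of the order of moves.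
   Context: Rotor-router walk on a graph: each vertex $u$ has a fixed cyclic ordering of its neighbors and a rotor pointing to one of them (initial positions arbitrary). A particle at $u$ (with $u\notin Z$) advances the rotor at $u$ to the next neighbor in the cyclic order and moves to that neighbor. Particles at vertices of $Z$ do not move. Simple random walk moves from $u$ to a uniformly random neighbor. $\mathbf{1}_x$ is the indicator function of $\{x\}$. *)

From mathcomp Require Import all_boot.
From Stdlib Require Import Reals.
Set Implicit Arguments. Unset Strict Implicit. Unset Printing Implicit Defensive.

Section Walks.
Variables (T : finType) (e : rel T) (Z : {set T}).

Definition deg (u : T) : nat := #|[pred v | e u v]|.

Definition srw_step (u v : T) : R :=
  if u \in Z then (if u == v then 1%R else 0%R)
  else (if e u v then (/ INR (deg u))%R else 0%R).

Fixpoint srw_pn (n : nat) (x y : T) : R :=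
  match n with
  | 0 => if x == y then 1%R else 0%R
  | n'.+1 => \big[Rplus/0%R]_(v : T) (srw_step x v * srw_pn n' v y)%R
  end.

Definition srw_in (Y : {set T}) (n : nat) (x : T) : R :=
  \big[Rplus/0%R]_(y in Y) srw_pn n x y.

(* hitting probability: H x is the probability that SRW from x, stopped on
   first hitting Z, stops in Y  (limit of srw_in Y n x as n -> oo) *)
Definition is_hit_prob (Y : {set T}) (H : T -> R) : Prop :=
  forall x, Un_cv (fun n => srw_in Y n x) (H x).

(* expected number of particles stopping in Y, s x particles started at x
   (independent walks; linearity of expectation) *)
Definition Hw (s : T -> nat) (H : T -> R) : R :=
  \big[Rplus/0%R]_(x : T) (INR (s x) * H x)%R.

(* rotor-router: nbrs u is the cyclic ordering of the neighbours of u *)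
Definition rotor_state := ((T -> nat) * (T -> T))%type.

Definition rotor_move (nbrs : T -> seq T) (st : rotor_state) (u : T)
  : option rotor_state :=
  let: (cnt, rot) := st in
  if (u \notin Z) && (0 < cnt u) then
    let r := next (nbrs u) (rot u) in
    Some ((fun w => if w == r then (if w == u then cnt w else (cnt w).+1)
                    else if w == u then (cnt w).-1 else cnt w),
          (fun w => if w == u then r else rot w))
  else None.

Fixpoint rotor_run (nbrs : T -> seq T) (st : rotor_state) (ms : seq T)
  : option rotor_state :=
  match ms with
  | [::] => Some st
  | u :: ms' =>
      match rotor_move nbrs st u with
      | Some st' => rotor_run nbrs st' ms'
      | None => None
      end
  end.

End Walks.

(* Let H be the hitting probability of Y for simple random walk stopped on Z.
   Then H is the indicator of Y on Z and H is harmonic off Z, i.e. the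
   discrete gradients H v - H u over the neighbours v of u sum to 0.
   Attach to every rotor at u the partial sum of these gradients along the
   cyclic order of the neighbours of u, up to and including the vertex the
   rotor points to.  Because the full cyclic sum vanishes, firing a particle
   at u increases the rotor weight at u by exactly H r - H u, where r is the
   new rotor target, which is also the change of the particle potential
   sum_x cnt x * H x.  Hence "particle potential minus rotor weights" is
   invariant along any rotor-router run.  At the start the potential is
   Hw s H; at the end (all particles in Z) it is the number of particles in
   Y.  So the discrepancy is a difference of rotor weights, and each rotor
   contributes the difference of two prefix sums, bounded by the sum of
   |H u - H v| over the neighbours v of u. *)
From HB Require Import structures.
From mathcomp Require Import all_boot.
From Stdlib Require Import Reals Lra.

Lemma Rplus_associative : associative Rplus.
Proof. by move=> *; rewrite Rplus_assoc. Qed.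
HB.instance Definition _ :=
  Monoid.isComLaw.Build R 0%R Rplus Rplus_associative Rplus_comm Rplus_0_l.

Open Scope R_scope.

Lemma sumR_mull {I : Type} (r : seq I) (P : pred I) (c : R) (F : I -> R) :
  c * \big[Rplus/0]_(i <- r | P i) F i = \big[Rplus/0]_(i <- r | P i) (c * F i).
Proof.
apply: (big_rec2 (fun a b => c * a = b)); first by rewrite Rmult_0_r.
by move=> i a b _ <-; rewrite Rmult_plus_distr_l.
Qed.

Lemma sumR_opp {I : Type} (r : seq I) (P : pred I) (F : I -> R) :
  \big[Rplus/0]_(i <- r | P i) (- F i) = - \big[Rplus/0]_(i <- r | P i) F i.
Proof. by apply: (big_rec2 (fun a b => a = - b)) => [|i a b _ ->]; lra. Qed.

Lemma sumR_const {T : finType} (P : pred T) (c : R) :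
  \big[Rplus/0]_(i | P i) c = INR #|P| * c.
Proof.
rewrite big_const; elim: #|P| => [|n IH]; first by rewrite /= Rmult_0_l.
by rewrite iterS IH S_INR; lra.
Qed.

Lemma sumR_pred1 {T : finType} (a : T) (c : R) :
  \big[Rplus/0]_(x : T) (if x == a then c else 0) = c.
Proof. by rewrite (bigD1 a) //= eqxx big1 ?Rplus_0_r // => x /negbTE ->. Qed.

Lemma sumR_le {I : Type} (r : seq I) (P : pred I) (F G : I -> R) :
  (forall i, P i -> F i <= G i) ->
  \big[Rplus/0]_(i <- r | P i) F i <= \big[Rplus/0]_(i <- r | P i) G i.
Proof.
move=> leFG; apply: (big_rec2 (fun a b => a <= b)) => [|i a b Pi le_ab]; first lra.
by have := leFG i Pi; lra.
Qed.

Lemma sumR_Rabs {I : Type} (r : seq I) (P : pred I) (F : I -> R) :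
  Rabs (\big[Rplus/0]_(i <- r | P i) F i) <= \big[Rplus/0]_(i <- r | P i) Rabs (F i).
Proof.
apply: (big_rec2 (fun a b => Rabs a <= b)) => [|i a b _ le_ab].
  by rewrite Rabs_R0; lra.
by apply: Rle_trans (Rabs_triang _ _) _; lra.
Qed.

Lemma INR_sum {I : Type} (r : seq I) (P : pred I) (F : I -> nat) :
  INR (\sum_(i <- r | P i) F i) = \big[Rplus/0]_(i <- r | P i) INR (F i).
Proof. by apply: (big_morph INR) => // x y; exact: plus_INR. Qed.

Lemma sumR_enum_nbrs {T : finType} (e : rel T) (c : seq T) (u : T) (F : T -> R) :
  uniq c -> (forall v, (v \in c) = e u v) ->
  \big[Rplus/0]_(v <- c) F v = \big[Rplus/0]_(v | e u v) F v.
Proof.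
move=> c_uniq c_nbrs; rewrite -big_enum; apply: perm_big.
by apply: uniq_perm; rewrite ?enum_uniq // => v; rewrite mem_enum c_nbrs.
Qed.

Lemma sumR_Rabs_ge0 {T : Type} (c : seq T) (f : T -> R) :
  0 <= \big[Rplus/0]_(v <- c) Rabs (f v).
Proof.
apply: (big_rec (fun b => 0 <= b)) => [|v b _ b_ge0]; first lra.
by have := Rabs_pos (f v); lra.
Qed.

Lemma prefix_sum_Rabs {T : Type} (c : seq T) (f : T -> R) (a : nat) :
  Rabs (\big[Rplus/0]_(v <- take a c) f v) <= \big[Rplus/0]_(v <- c) Rabs (f v).
Proof.
apply: Rle_trans (sumR_Rabs _ _ _) _.
rewrite -[X in _ <= \big[_/_]_(_ <- X) _](cat_take_drop a) big_cat /=.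
by have := sumR_Rabs_ge0 (drop a c) f; lra.
Qed.

Lemma prefix_sum_dist {T : Type} (c : seq T) (f : T -> R) (a b : nat) :
  Rabs (\big[Rplus/0]_(v <- take a c) f v - \big[Rplus/0]_(v <- take b c) f v)
  <= \big[Rplus/0]_(v <- c) Rabs (f v).
Proof.
elim: c a b => [|x c IH] [|a] [|b] /=; rewrite ?big_nil ?big_cons;
  rewrite ?Rminus_diag ?Rabs_R0 ?Rminus_0_r; try lra;
  have mass_ge0 := sumR_Rabs_ge0 c f; have fx_ge0 := Rabs_pos (f x).
- by lra.
- rewrite Rabs_minus_sym Rminus_0_r; apply: Rle_trans (Rabs_triang _ _) _.
  by have := prefix_sum_Rabs c f b; lra.
- apply: Rle_trans (Rabs_triang _ _) _.
  by have := prefix_sum_Rabs c f a; lra.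
- rewrite (_ : forall p q, f x + p - (f x + q) = p - q); last by move=> p q; ring.
  by have := IH a b; lra.
Qed.

Lemma Un_cv_shift (u : nat -> R) l : Un_cv u l -> Un_cv (fun n => u n.+1) l.
Proof.
move=> cv_u eps eps_gt0; have [N HN] := cv_u eps eps_gt0.
by exists N => n /leP/leqW/leP; apply: HN.
Qed.

Lemma Un_cv_const (c : R) : Un_cv (fun _ => c) c.
Proof. by move=> eps eps_gt0; exists O => n _; rewrite /R_dist Rminus_diag Rabs_R0. Qed.

Lemma Un_cv_lincomb {I : Type} (r : seq I) (a : I -> R) (f : nat -> I -> R) (L : I -> R) :
  (forall i, Un_cv (fun n => f n i) (L i)) ->
  Un_cv (fun n => \big[Rplus/0]_(i <- r) (a i * f n i))
        (\big[Rplus/0]_(i <- r) (a i * L i)).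
Proof.
move=> cv_f; elim: r => [|i r IH].
  rewrite big_nil; apply: (Un_cv_ext (fun _ => 0)) (Un_cv_const 0) => n.
  by rewrite big_nil.
rewrite big_cons; apply: (Un_cv_ext (fun n => a i * f n i + _)) => [n|].
  by rewrite big_cons.
exact: CV_plus (CV_mult _ _ _ _ (Un_cv_const (a i)) (cv_f i)) IH.
Qed.

Section HittingProbability.
Context {T : finType} {e : rel T} {Z : {set T}}.

Lemma srw_pn_absorbed n x y :
  x \in Z -> srw_pn e Z n x y = if x == y then 1 else 0.
Proof.
move=> xZ; elim: n => [|n IH] //=.
rewrite (eq_bigr (fun v => if v == x then srw_pn e Z n x y else 0)) ?sumR_pred1 //.
by move=> v _; rewrite /srw_step xZ eq_sym; case: eqP => [->|_]; lra.
Qed.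

Lemma srw_in_succ (Y : {set T}) n x :
  srw_in e Z Y n.+1 x = \big[Rplus/0]_(v : T) (srw_step e Z x v * srw_in e Z Y n v).
Proof. by rewrite /srw_in /= exchange_big /=; apply: eq_bigr => v _; rewrite sumR_mull. Qed.

Context {Y : {set T}} {H : T -> R}.
Hypothesis H_def : is_hit_prob e Z Y H.

Lemma hit_prob_on_Z x : x \in Z -> H x = if x \in Y then 1 else 0.
Proof.
move=> xZ; set c := if x \in Y then 1 else 0.
apply: (UL_sequence _ _ _ (H_def x)); apply: (Un_cv_ext (fun _ => c)) (Un_cv_const c) => n.
rewrite /srw_in big_mkcond (eq_bigr (fun y => if y == x then c else 0)) ?sumR_pred1 //.
by move=> y _; rewrite srw_pn_absorbed // (eq_sym x); case: eqP => [->|_] //; case: ifP.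
Qed.

Lemma hit_prob_mean_value x :
  H x = \big[Rplus/0]_(v : T) (srw_step e Z x v * H v).
Proof.
apply: (UL_sequence _ _ _ (Un_cv_shift _ _ (H_def x))).
apply: (Un_cv_ext (fun n => \big[Rplus/0]_(v : T) (srw_step e Z x v * srw_in e Z Y n v))).
  by move=> n; rewrite srw_in_succ.
exact: Un_cv_lincomb.
Qed.

Lemma hit_prob_harmonic x :
  x \notin Z -> \big[Rplus/0]_(v | e x v) (H v - H x) = 0.
Proof.
move=> xZ; have mean_x := hit_prob_mean_value x.
rewrite /srw_step (negbTE xZ) in mean_x.
have {}mean_x : H x = / INR (deg e x) * \big[Rplus/0]_(v | e x v) H v.
  rewrite mean_x sumR_mull [in RHS]big_mkcond.
  by apply: eq_bigr => v _; case: ifP => _; lra.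
rewrite big_split /= sumR_opp sumR_const -/(deg e x).
have [deg0|deg_gt0] := posnP (deg e x).
  rewrite big_pred0 => [|v]; last exact: (card0_eq deg0).
  by rewrite deg0 /=; lra.
rewrite mean_x -Rmult_assoc Rinv_r; first lra.
by apply: not_0_INR => deg0; rewrite deg0 in deg_gt0.
Qed.

Lemma Hw_absorbed {cnt : T -> nat} :
  Y \subset Z -> (forall x, x \notin Z -> (cnt x = 0)%nat) ->
  Hw cnt H = INR (\sum_(y in Y) cnt y).
Proof.
move=> YZ cnt_off_Z; rewrite /Hw INR_sum [in RHS]big_mkcond; apply: eq_bigr => x _.
have [xZ|xNZ] := boolP (x \in Z).
  by rewrite hit_prob_on_Z //; case: (x \in Y); lra.
have -> : (x \in Y) = false by apply/negbTE; apply: contra xNZ; exact: subsetP.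
by rewrite cnt_off_Z //=; lra.
Qed.

End HittingProbability.

Definition rotor_weight {T : eqType} (H : T -> R) (c : seq T) (u x : T) : R :=
  \big[Rplus/0]_(v <- take (index x c).+1 c) (H v - H u).

(* When the gradients around u sum to 0, advancing the rotor to the next
   neighbour r adds exactly the gradient H r - H u (also across the
   wrap-around from the last neighbour back to the first). *)
Lemma rotor_weight_next {T : eqType} (H : T -> R) (c : seq T) (u x : T) :
  uniq c -> x \in c -> \big[Rplus/0]_(v <- c) (H v - H u) = 0 ->
  rotor_weight H c u (next c x) = rotor_weight H c u x + (H (next c x) - H u).
Proof.
case: c => [|y c] // c_uniq xc grad_sum0.
rewrite next_nth xc /rotor_weight.
have x_lt : (index x (y :: c) < size (y :: c))%nat by rewrite index_mem.
have [x_notlast|x_last] := ltnP (index x (y :: c)) (size c).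
  rewrite -[nth y c _]/(nth y (y :: c) (index x (y :: c)).+1) index_uniq //.
  by rewrite (take_nth y) // -cats1 big_cat big_seq1.
have -> : index x (y :: c) = size c by apply/eqP; rewrite eqn_leq x_last andbT -ltnS.
rewrite nth_default //= eqxx take0 big_seq1 take_size grad_sum0; lra.
Qed.

Lemma rotor_weight_dist {T : eqType} (H : T -> R) (c : seq T) (u x y : T) :
  Rabs (rotor_weight H c u x - rotor_weight H c u y)
  <= \big[Rplus/0]_(v <- c) Rabs (H u - H v).
Proof.
rewrite (eq_bigr (fun v => Rabs (H v - H u))) => [|v _]; last exact: Rabs_minus_sym.
exact: prefix_sum_dist.
Qed.

Section RotorRouter.
Context {T : finType} {Z : {set T}} {nbrs : T -> seq T} {H : T -> R}.
Hypothesis nbrs_uniq : forall u, uniq (nbrs u).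
Hypothesis nbrs_irr : forall u, u \notin nbrs u.
Hypothesis nbrs_harmonic :
  forall u, u \notin Z -> \big[Rplus/0]_(v <- nbrs u) (H v - H u) = 0.

Definition rotors_valid (rot : T -> T) : Prop :=
  forall w, w \notin Z -> rot w \in nbrs w.

Definition rotor_invariant (st : rotor_state T) : R :=
  Hw st.1 H - \big[Rplus/0]_(u in ~: Z) rotor_weight H (nbrs u) u (st.2 u).

Lemma Hw_move_particle (cnt : T -> nat) (u r : T) :
  r != u -> (0 < cnt u)%nat ->
  Hw (fun w => if w == r then (if w == u then cnt w else (cnt w).+1)
               else if w == u then (cnt w).-1 else cnt w) H
  = Hw cnt H + (H r - H u).
Proof.
move=> /negbTE r_neq_u cnt_u_gt0.
rewrite /Hw; transitivity (\big[Rplus/0]_(x : T) (INR (cnt x) * H x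
      + ((if x == r then H r else 0) + (if x == u then - H u else 0)))).
  apply: eq_bigr => x _; have [->|_] := eqVneq x r.
    by rewrite r_neq_u S_INR; lra.
  have [->|_] := eqVneq x u; last lra.
  by rewrite -{2}(prednK cnt_u_gt0) S_INR; lra.
by rewrite !big_split /= !sumR_pred1; lra.
Qed.

Lemma rotor_weights_update (rot : T -> T) (u r : T) :
  u \notin Z ->
  \big[Rplus/0]_(w in ~: Z) rotor_weight H (nbrs w) w (if w == u then r else rot w)
  = \big[Rplus/0]_(w in ~: Z) rotor_weight H (nbrs w) w (rot w)
    + (rotor_weight H (nbrs u) u r - rotor_weight H (nbrs u) u (rot u)).
Proof.
move=> uNZ; have uCZ : u \in ~: Z by rewrite in_setC.
rewrite !(bigD1 u uCZ) /= eqxx.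
rewrite (eq_bigr (fun w => rotor_weight H (nbrs w) w (rot w))) => [|w /andP[_ /negbTE ->]] //.
lra.
Qed.

Lemma rotor_move_invariant {st st' : rotor_state T} {u : T} :
  rotors_valid st.2 -> rotor_move Z nbrs st u = Some st' ->
  rotors_valid st'.2 /\ rotor_invariant st' = rotor_invariant st.
Proof.
case: st => cnt rot /= valid_rot.
rewrite /rotor_move; case: ifP => // /andP[uNZ cnt_u_gt0] [<-] {st'}.
set r := next (nbrs u) (rot u).
have r_nbr : r \in nbrs u by rewrite mem_next valid_rot.
have r_neq_u : r != u by apply: contraTneq r_nbr => ->; exact: nbrs_irr.
split=> [w wNZ /=|]; first by case: eqP => [->|_]; [|exact: valid_rot].
rewrite /rotor_invariant /= Hw_move_particle // rotor_weights_update //.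
by rewrite rotor_weight_next ?valid_rot ?nbrs_harmonic // -/r; lra.
Qed.

Lemma rotor_run_invariant {ms : seq T} {st st' : rotor_state T} :
  rotor_run Z nbrs st ms = Some st' -> rotors_valid st.2 ->
  rotor_invariant st' = rotor_invariant st.
Proof.
elim: ms st => [|u ms IH] st /=; first by case=> ->.
case move_u: (rotor_move Z nbrs st u) => [st1|] // run_ms valid_st.
have [valid_st1 inv_st1] := rotor_move_invariant valid_st move_u.
by rewrite (IH st1 run_ms valid_st1) inv_st1.
Qed.

End RotorRouter.

Close Scope R_scope.

Theorem proposition5p7
  (T : finType) (e : rel T)
  (e_sym : symmetric e) (e_irr : irreflexive e)
  (e_conn : forall x y : T, connect e x y)
  (Y Z : {set T}) (YsubZ : Y \subset Z) (Z_nonempty : Z != set0)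
  (s : T -> nat)
  (nbrs : T -> seq T)
  (nbrs_uniq : forall u, uniq (nbrs u))
  (nbrs_spec : forall u v, (v \in nbrs u) = e u v)
  (rot0 : T -> T)
  (rot0_spec : forall u, u \notin Z -> rot0 u \in nbrs u)
  (ms : seq T) (cnt : T -> nat) (rot : T -> T)
  (run_ok : rotor_run Z nbrs (s, rot0) ms = Some (cnt, rot))
  (run_done : forall x, x \notin Z -> cnt x = 0%N)
  (H : T -> R) (H_def : is_hit_prob e Z Y H) :
  (Rabs (INR (\sum_(y in Y) cnt y) - Hw s H)
   <= \big[Rplus/0%R]_(u in ~: Z)
        \big[Rplus/0%R]_(v | e u v) Rabs (H u - H v))%R.
Proof.
have sum_nbrs u F := sumR_enum_nbrs e (nbrs u) u F (nbrs_uniq u) (nbrs_spec u).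
have nbrs_irr u : u \notin nbrs u by rewrite nbrs_spec e_irr.
have nbrs_harmonic u : u \notin Z ->
    (\big[Rplus/0]_(v <- nbrs u) (H v - H u) = 0)%R.
  by rewrite sum_nbrs; exact: hit_prob_harmonic H_def u.
have := rotor_run_invariant nbrs_uniq nbrs_irr nbrs_harmonic run_ok rot0_spec.
rewrite /rotor_invariant /= (Hw_absorbed H_def YsubZ run_done) => invariant.
(* The discrepancy is the total change of the rotor weights. *)
rewrite (_ : (_ - _ = \big[Rplus/0]_(u in ~: Z)
      (rotor_weight H (nbrs u) u (rot u) - rotor_weight H (nbrs u) u (rot0 u)))%R);
  last by rewrite big_split sumR_opp /=; lra.
apply: Rle_trans (sumR_Rabs _ _ _) _; apply: sumR_le => u _.
by rewrite -sum_nbrs; exact: rotor_weight_dist.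
Qed.
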